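(* Let $x\ge 0$ and $y$ be integers with $M(x,y)\neq\emptyset$, let $G_0$ be a minimal graph in $M(x,y)$, let $A\neq\emptyset$ be an independent set of vertices of $G_0$, and let $G_0'=G_0-A$. Then (a) $\chi(G_0')=\chi(G_0)-1$; (b) $\mathrm{cl}(G_0')=\mathrm{cl}(G_0)$; (c) $|V(G_0)|=\chi(G_0)+2f(G_0)-x-1$.
   Context: All graphs are finite, simple and undirected; the empty graph is allowed, with $\chi=\mathrm{cl}=0$. $\mathrm{cl}(G)$ is the clique number, $\chi(G)$ the chromatic number, and $f(G)=\chi(G)-\mathrm{cl}(G)$. For integers $x,y$, $M(x,y)=\{G: |V(G)|<\chi(G)+2f(G)-x \text{ and } f(G)\le y\}$. A graph $G_0$ in a nonempty set $\mathcal M$ of graphs is minimal in $\mathcal M$ if $|V(G_0)|=\min\{|V(G)|:G\in\mathcal M\}$. *)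

From HB Require Import structures.
From mathcomp Require Import all_boot all_order all_algebra.
Set Implicit Arguments. Unset Strict Implicit. Unset Printing Implicit Defensive.
Import Order.TTheory GRing.Theory Num.Theory.

Section Graphs.
Variables (T : finType) (e : rel T).

Definition simple_graph : Prop := symmetric e /\ irreflexive e.

(* proper k-colouring (loops are ignored, irrelevant for simple graphs) *)
Definition colorable (k : nat) : bool :=
  [exists c : {ffun T -> 'I_k},
     [forall x, forall y, (e x y && (x != y)) ==> (c x != c y)]].

Lemma colorable_exists : exists k, colorable k.
Proof.
exists #|T|; apply/existsP; exists [ffun x => enum_rank x].
apply/forallP => x; apply/forallP => y; apply/implyP => /andP [_ nxy].
by rewrite !ffunE; apply: contra nxy => /eqP /enum_rank_inj ->.
Qed.

Definition chi : nat := ex_minn colorable_exists.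

Definition is_clique (K : {set T}) : bool :=
  [forall x in K, forall y in K, (x != y) ==> e x y].

Definition cl : nat := \max_(K : {set T} | is_clique K) #|K|.

Definition f_gap : int := (chi%:Z - cl%:Z)%R.

Definition is_independent (A : {set T}) : bool :=
  [forall u in A, forall v in A, ~~ e u v].

Definition inM (x y : int) : bool :=
  ((#|T|%:Z < chi%:Z + 2%:Z * f_gap - x) && (f_gap <= y))%R.

End Graphs.

Definition del_vert (T : finType) (A : {set T}) : finType :=
  {x : T | x \notin A}.
Definition del_rel (T : finType) (e : rel T) (A : {set T}) : rel (del_vert A) :=
  fun u v => e (val u) (val v).
Arguments del_rel [T] e A.

(* Write n = |V|, c = chi and w = cl.  Membership in M(x,y) reads
   n + 2w + x < 3c together with c - w <= y.  Deleting a nonempty independent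
   set B from G0 loses |B| >= 1 vertices, lowers chi by at most one (B becomes
   a new colour class) and lowers cl by at most one (a clique meets B at most
   once).  Since G0 - B is smaller than G0 it is not in M(x,y), and checking
   the four possibilities for (chi, cl) shows that exactly one parameter drops
   (lemma [drop_dichotomy]).  Deleting the colour class C of a vertex a in an
   optimal colouring lowers chi, so cl(G0 - C) = cl(G0); as {a} is contained
   in C, also cl(G0 - a) = cl(G0), hence chi(G0 - a) = chi(G0) - 1, and since
   every B containing a satisfies chi(G0 - B) <= chi(G0 - a), chi drops for
   every nonempty independent B.  For (c), G0 is not
   complete (a complete graph has n = w >= c, contradicting n + 2w + x < 3c),
   and applying (a), (b) to a non-adjacent pair forces n + 2w + x >= 3c - 1. *)
From HB Require Import structures.
From mathcomp Require Import all_boot all_order all_algebra.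
From mathcomp Require Import zify.
Import Order.TTheory GRing.Theory Num.Theory.

Set Implicit Arguments.
Unset Strict Implicit.
Unset Printing Implicit Defensive.

Section ChromaticAndClique.
Variables (T : finType) (e : rel T).

Definition proper_colouring (k : nat) (c : {ffun T -> 'I_k}) : bool :=
  [forall u, forall v, (e u v && (u != v)) ==> (c u != c v)].

Lemma proper_colouringP k (c : {ffun T -> 'I_k}) :
  reflect (forall u v, e u v -> u != v -> c u != c v) (proper_colouring c).
Proof.
apply: (iffP forallP) => [Hc u v euv nuv | Hc u].
  by have /forallP/(_ v) := Hc u; rewrite euv nuv.
by apply/forallP => v; apply/implyP => /andP [euv nuv]; exact: Hc.
Qed.

Lemma chi_min k : colorable e k -> chi e <= k.
Proof. by rewrite /chi; case: ex_minnP => m _; apply. Qed.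

Lemma chi_colorable : colorable e (chi e).
Proof. by rewrite /chi; case: ex_minnP. Qed.

Lemma chi_le_card : chi e <= #|T|.
Proof.
apply: chi_min; apply/existsP; exists [ffun u => enum_rank u].
apply/proper_colouringP => u v _; rewrite !ffunE.
by apply: contra => /eqP /enum_rank_inj ->.
Qed.

Lemma cl_max K : is_clique e K -> #|K| <= cl e.
Proof. by move=> HK; rewrite /cl (bigD1 K) //= leq_maxl. Qed.

Lemma is_cliqueP (K : {set T}) :
  reflect {in K &, forall u v, u != v -> e u v} (is_clique e K).
Proof.
apply: (iffP forallP) => [HK u v uK vK | HK u].
  by have /implyP/(_ uK)/forallP/(_ v)/implyP/(_ vK)/implyP := HK u.
apply/implyP => uK; apply/forallP => v; apply/implyP => vK.
by apply/implyP; exact: HK.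
Qed.

Lemma is_independentP (A : {set T}) :
  reflect {in A &, forall u v, ~~ e u v} (is_independent e A).
Proof.
apply: (iffP forallP) => [HA u v uA vA | HA u].
  by have /implyP/(_ uA)/forallP/(_ v)/implyP/(_ vA) := HA u.
by apply/implyP => uA; apply/forallP => v; apply/implyP; exact: HA.
Qed.

End ChromaticAndClique.

(* chi and cl are monotone along maps that preserve edges (and, for cl,
   are injective): a colouring pulls back, a clique pushes forward. *)
Lemma chi_hom (T1 T2 : finType) (e1 : rel T1) (e2 : rel T2) (h : T1 -> T2) :
  (forall u v, e1 u v -> u != v -> e2 (h u) (h v) && (h u != h v)) ->
  chi e1 <= chi e2.
Proof.
move=> Hh; apply: chi_min; case/existsP: (chi_colorable e2) => c /proper_colouringP Hc.
apply/existsP; exists [ffun u => c (h u)]; apply/proper_colouringP => u v euv nuv.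
by rewrite !ffunE; case/andP: (Hh u v euv nuv); exact: Hc.
Qed.

Lemma cl_hom (T1 T2 : finType) (e1 : rel T1) (e2 : rel T2) (h : T1 -> T2) :
  injective h -> (forall u v, e1 u v -> e2 (h u) (h v)) -> cl e1 <= cl e2.
Proof.
move=> h_inj Hh; apply/bigmax_leqP => K /is_cliqueP HK.
rewrite -(card_imset K h_inj); apply: cl_max; apply/is_cliqueP.
move=> _ _ /imsetP [u uK ->] /imsetP [v vK ->] nhuv.
by apply/Hh/HK => //; apply: contra nhuv => /eqP ->.
Qed.

Section VertexDeletion.
Variables (T : finType) (e : rel T).

Lemma simple_del A : simple_graph e -> simple_graph (del_rel e A).
Proof. by case=> e_sym e_irr; split=> [u v | u]; [exact: e_sym | exact: e_irr]. Qed.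

Lemma card_del (A : {set T}) : #|del_vert A| = #|T| - #|A|.
Proof. by rewrite card_sig -(cardC A) addKn; apply: eq_card => u; rewrite !inE. Qed.

Definition del_incl (A B : {set T}) (sBA : B \subset A) (u : del_vert A) : del_vert B :=
  exist _ (val u) (contra (subsetP sBA (val u)) (valP u)).

Lemma chi_del_mono (A B : {set T}) : B \subset A ->
  chi (del_rel e A) <= chi (del_rel e B).
Proof.
by move=> sBA; apply: (chi_hom (h := del_incl sBA)) => u v euv nuv; apply/andP.
Qed.

Lemma cl_del_mono (A B : {set T}) : B \subset A ->
  cl (del_rel e A) <= cl (del_rel e B).
Proof.
move=> sBA; apply: (cl_hom (h := del_incl sBA)) => // u v /(congr1 val) uv.
exact: val_inj.
Qed.

Lemma chi_del (A : {set T}) : chi (del_rel e A) <= chi e.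
Proof. by apply: (chi_hom (h := val)) => u v euv nuv; apply/andP. Qed.

Lemma cl_del (A : {set T}) : cl (del_rel e A) <= cl e.
Proof. exact: (cl_hom (h := val) val_inj). Qed.

(* An independent set can receive one new colour. *)
Lemma chi_del_indep (A : {set T}) :
  is_independent e A -> chi e <= (chi (del_rel e A)).+1.
Proof.
move=> /is_independentP indA; set k := chi (del_rel e A).
case/existsP: (chi_colorable (del_rel e A)) => c /proper_colouringP Hc.
apply: chi_min; apply/existsP.
exists [ffun v => if insub v is Some u then widen_ord (leqnSn k) (c u) else ord_max].
apply/proper_colouringP => a b eab nab; rewrite !ffunE.
case: insubP => [u _ ua|aA]; case: insubP => [w _ wb|bA] /=.
- rewrite -val_eqE /= val_eqE; apply: Hc; first by rewrite /del_rel ua wb.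
  by apply: contra nab => /eqP uw; rewrite -ua -wb uw.
- by rewrite -val_eqE /= ltn_eqF.
- by rewrite -val_eqE /= gtn_eqF.
- by move: (indA a b (negbNE aA) (negbNE bA)); rewrite eab.
Qed.

(* A clique meets an independent set in at most one vertex. *)
Lemma cl_del_indep (A : {set T}) :
  is_independent e A -> cl e <= (cl (del_rel e A)).+1.
Proof.
move=> /is_independentP indA; apply/bigmax_leqP => K /is_cliqueP HK.
rewrite -(cardsID A K) addnC -addn1 leq_add //.
  set K' := [set u : del_vert A | val u \in K].
  have -> : K :\: A = val @: K'.
    apply/setP => v; rewrite !inE; apply/andP/imsetP => [[vA vK] | [u]].
      by exists (Sub v vA : del_vert A); rewrite ?inE SubK.
    by rewrite inE => uK ->; split=> //; exact: (valP u).
  rewrite card_imset; last exact: val_inj.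
  apply: cl_max; apply/is_cliqueP => u w; rewrite !inE => uK wK nuw.
  by apply: HK; rewrite // val_eqE.
apply/card_le1_eqP => a b; rewrite !inE => /andP [aK aA] /andP [bK bA].
apply/eqP; apply: contraNT (indA a b aA bA) => nba.
by apply: HK; rewrite // eq_sym.
Qed.

Lemma chi_del_colour_class k (c : {ffun T -> 'I_k}) a :
  proper_colouring e c -> chi (del_rel e [set v | c v == c a]) <= k.-1.
Proof.
move=> /proper_colouringP Hc; apply: chi_min.
have other (u : del_vert [set v | c v == c a]) : c a != c (val u).
  by have := valP u; rewrite inE eq_sym.
apply/existsP; exists [ffun u => s2val (unlift_some (other u))].
apply/proper_colouringP => u w euw nuw; rewrite !ffunE.
apply: contraNneq (Hc _ _ euw nuw) => ij.
by rewrite (s2valP (unlift_some (other u))) (s2valP (unlift_some (other w))) ij.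
Qed.

Lemma colour_class_indep k (c : {ffun T -> 'I_k}) a :
  simple_graph e -> proper_colouring e c -> is_independent e [set v | c v == c a].
Proof.
case=> _ e_irr /proper_colouringP Hc; apply/is_independentP => u v.
rewrite !inE => /eqP cu /eqP cv; case: (eqVneq u v) => [-> | nuv].
  by rewrite e_irr.
by apply: contraTN (eqxx (c a)) => euv; rewrite -{1}cu -cv Hc.
Qed.

End VertexDeletion.

Section MinimalGraph.
Variables (x y : int) (T : finType) (e : rel T).
Hypotheses (e_simple : simple_graph e) (e_inM : inM e x y).
Hypothesis e_minimal : forall (T' : finType) (e' : rel T'),
  simple_graph e' -> inM e' x y -> #|T| <= #|T'|.

Lemma del_notin_M (B : {set T}) : B != set0 -> ~~ inM (del_rel e B) x y.
Proof.
move=> B0; apply/negP => /(e_minimal (simple_del B e_simple)).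
rewrite card_del; have := max_card B; rewrite -card_gt0 in B0; lia.
Qed.

Lemma drop_dichotomy (B : {set T}) : B != set0 -> is_independent e B ->
  (chi (del_rel e B)).+1 = chi e /\ cl (del_rel e B) = cl e \/
  chi (del_rel e B) = chi e /\ (cl (del_rel e B)).+1 = cl e.
Proof.
move=> B0 indB; have notM := del_notin_M B0.
have := chi_del e B; have := chi_del_indep indB.
have := cl_del e B; have := cl_del_indep indB.
move: e_inM notM; rewrite /inM /f_gap card_del.
have := max_card B; rewrite -card_gt0 in B0; lia.
Qed.

(* Deleting the colour class of a vertex in an optimal colouring keeps cl. *)
Lemma cl_del_colour_class a : exists2 C : {set T},
  a \in C & cl (del_rel e C) = cl e.
Proof.
case/existsP: (chi_colorable e) => c Hc.
exists [set v | c v == c a]; first by rewrite inE.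
have := chi_del_colour_class a Hc; have := ltn_ord (c a).
have C0 : [set v | c v == c a] != set0 by apply/set0Pn; exists a; rewrite inE.
by case: (drop_dichotomy C0 (colour_class_indep a e_simple Hc)) => [[_ ->] | [-> _]] //; lia.
Qed.

(* Deleting a single vertex lowers chi: cl cannot drop, as cl(G0 - a) >= cl(G0 - C). *)
Lemma chi_del_vertex a : (chi (del_rel e [set a])).+1 = chi e.
Proof.
have a0 : [set a] != set0 by apply/set0Pn; exists a; rewrite inE.
have indA : is_independent e [set a].
  by case: e_simple => _ e_irr; apply/is_independentP => u v /set1P -> /set1P ->; rewrite e_irr.
case: (cl_del_colour_class a) => C aC clC.
have := cl_del_mono e (_ : [set a] \subset C); rewrite sub1set clC => /(_ aC).
by case: (drop_dichotomy a0 indA) => [[-> _] | [_ <-]] //; rewrite ltnn.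
Qed.

Lemma drop_indep (B : {set T}) : B != set0 -> is_independent e B ->
  (chi (del_rel e B)).+1 = chi e /\ cl (del_rel e B) = cl e.
Proof.
move=> B0 indB; case/set0Pn: (B0) => a aB.
have := chi_del_mono e (_ : [set a] \subset B); rewrite sub1set => /(_ aB).
by rewrite -ltnS chi_del_vertex; case: (drop_dichotomy B0 indB) => // [[-> _]]; rewrite ltnn.
Qed.

(* G0 is not complete: otherwise n = cl >= chi, against n + 2cl + x < 3chi. *)
Lemma exists_non_edge : (0 <= x)%R -> exists u v, u != v /\ ~~ e u v.
Proof.
move=> x_ge0; case: (boolP [exists u, exists v, (u != v) && ~~ e u v]).
  by case/existsP => u /existsP [v /andP non_edge]; exists u, v.
move=> /existsPn complete; exfalso.
have : #|[set: T]| <= cl e.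
  apply/cl_max/is_cliqueP => u v _ _ nuv; apply/negPn/negP => neuv.
  by have /existsPn/(_ v) := complete u; rewrite nuv neuv.
have := chi_le_card e; move: e_inM; rewrite /inM /f_gap cardsT; lia.
Qed.

(* Part (c), from parts (a), (b) applied to a non-adjacent pair. *)
Lemma order_of_minimal : (0 <= x)%R ->
  (#|T|%:Z = (chi e)%:Z + 2%:Z * f_gap e - x - 1)%R.
Proof.
move=> /exists_non_edge [u [v [nuv neuv]]].
have B0 : [set u; v] != set0 by apply/set0Pn; exists u; rewrite !inE eqxx.
have indB : is_independent e [set u; v].
  case: e_simple => e_sym e_irr; apply/is_independentP.
  by move=> a b /set2P [] -> /set2P [] ->; rewrite ?e_irr // e_sym.
have [chiB clB] := drop_indep B0 indB.
have := del_notin_M B0; have := max_card [set u; v].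
move: e_inM; rewrite /inM /f_gap card_del cards2 nuv; lia.
Qed.

End MinimalGraph.

Unset Implicit Arguments.
Local Open Scope ring_scope.

Theorem lemma3p1 (x y : int) (T : finType) (e : rel T) (A : {set T}) :
  0 <= x ->
  simple_graph e ->
  inM e x y ->
  (forall (T' : finType) (e' : rel T'), simple_graph e' -> inM e' x y ->
     (#|T| <= #|T'|)%N) ->
  A != set0 ->
  is_independent e A ->
  [/\ chi (del_rel e A) = (chi e).-1,
      cl (del_rel e A) = cl e
    & #|T|%:Z = (chi e)%:Z + 2%:Z * f_gap e - x - 1].
Proof.
move=> x_ge0 e_simple e_inM e_minimal A0 indA.
have [chiA clA] := drop_indep e_simple e_inM e_minimal A0 indA.
split=> //; first by rewrite -chiA.
exact: order_of_minimal e_simple e_inM e_minimal x_ge0.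
Qed.
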